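(* Let $p,q,r\in(0,1)$ with $p+q+r=1$. Let $X_1,\eta_2,\eta_3,\ldots$ be independent random variables, each taking the values $1,-1,0$ with probabilities $p,q,r$ respectively, and let $K_3,K_4,\ldots$ be i.i.d. random variables, uniformly distributed on $\{1,2\}$ and independent of the previous ones. Set $X_2=\eta_2X_1$, $X_{n+1}=\eta_{n+1}X_{K_{n+1}}$ for $n\ge2$, and $S_n=\sum_{k=1}^nX_k$. Then: (a) as $n\to\infty$, $S_n/n$ converges in distribution to a random variable taking the value $p-q$ with probability $p^2$, the value $(p-q)/2$ with probability $pr$, the value $0$ with probability $pq+q^2+r$, the value $-(p-q)/2$ with probability $qr$, and the value $-(p-q)$ with probability $pq$; (b) as $n\to\infty$, $E(S_n/n)\to\dfrac{(p-q)^2}{2}(1+p-q)$ and $\operatorname{Var}(S_n/n)\to\dfrac{(p-q)^2}{4}\Big((p+q)(1+3p-q)-(p-q)^2\big(1+(p-q)\big)^2\Big)$.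
   Context: This is the elephant random walk with delays in which the elephant remembers only the first two steps: the second step is built from the first, and each step $n+1\ge3$ picks one of the first two steps uniformly at random and repeats it (probability $p$), reverses it (probability $q$), or is $0$ (probability $r$). *)

From HB Require Import structures.
From mathcomp Require Import all_boot all_order all_algebra.
From mathcomp Require Import all_classical all_reals all_analysis.
Set Implicit Arguments. Unset Strict Implicit. Unset Printing Implicit Defensive.
Import Order.TTheory GRing.Theory Num.Theory.
Import numFieldNormedType.Exports.
Local Open Scope classical_set_scope.
Local Open Scope ring_scope.

(* Indices of the driving random variables:
   None          = X_1,
   Some (inl n)  = eta_n   (n >= 2),
   Some (inr n)  = K_n     (n >= 3). *)
Definition erw_index := option (nat + nat)%type.

Definition erw_valid (i : erw_index) : bool :=
  match i with
  | None => true
  | Some (inl n) => (2 <= n)%N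
  | Some (inr n) => (3 <= n)%N
  end.

Section erw.
Context {d : measure_display} {T : measurableType d} {R : realType}.

Definition sigma_real (Y : T -> R) : set (set T) :=
  [set A | exists2 B : set R, measurable B & A = Y @^-1` B].

Definition sigma_nat (Y : T -> nat) : set (set T) :=
  [set A | exists B : set nat, A = Y @^-1` B].

Definition erw_events (X1 : T -> R) (eta : nat -> T -> R) (K : nat -> T -> nat)
    (i : erw_index) : set (set T) :=
  match i with
  | None => sigma_real X1
  | Some (inl n) => sigma_real (eta n)
  | Some (inr n) => sigma_nat (K n)
  end.

Definition erw_independent (P : probability T R) (X1 : T -> R)
    (eta : nat -> T -> R) (K : nat -> T -> nat) : Prop :=
  forall (J : seq erw_index) (A : erw_index -> set T),
    uniq J -> all erw_valid J ->
    (forall j, j \in J -> erw_events X1 eta K j (A j)) ->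
    P (\big[setI/setT]_(j <- J) A j) = (\prod_(j <- J) P (A j))%E.

(* The walk: X_1 given, X_2 = eta_2 X_1, X_{n+1} = eta_{n+1} X_{K_{n+1}}
   for n >= 2 (K takes values in {1,2} almost surely; on the null set where it
   does not, we put 0). *)
Definition erw_X (X1 : T -> R) (eta : nat -> T -> R) (K : nat -> T -> nat)
    (n : nat) : T -> R :=
  fun t =>
    match n with
    | 0 => 0
    | 1 => X1 t
    | 2 => eta 2%N t * X1 t
    | _ => eta n t * (if K n t == 1%N then X1 t
                      else if K n t == 2%N then eta 2%N t * X1 t else 0)
    end.

Definition erw_S X1 eta K (n : nat) : T -> R :=
  fun t => \sum_(1 <= k < n.+1) erw_X X1 eta K k t.

Definition cvg_in_distribution (P : probability T R) (Z : nat -> T -> R)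
    (F : R -> R) : Prop :=
  forall x : R, {for x, continuous F} ->
    (fun n => fine (P [set t | Z n t <= x])) @ \oo --> F x.
End erw.

Definition erw_limit_cdf {R : realType} (p q r : R) (x : R) : R :=
  (if p - q <= x then p ^+ 2 else 0)
  + (if (p - q) / 2 <= x then p * r else 0)
  + (if 0 <= x then p * q + q ^+ 2 + r else 0)
  + (if - ((p - q) / 2) <= x then q * r else 0)
  + (if - (p - q) <= x then p * q else 0).

From HB Require Import structures.
From mathcomp Require Import all_boot all_order all_algebra.
From mathcomp Require Import all_classical all_reals all_analysis.
From mathcomp Require Import measurable_realfun ring lra zify.
Set Implicit Arguments. Unset Strict Implicit. Unset Printing Implicit Defensive.
Import Order.TTheory GRing.Theory Num.Theory.
Import numFieldNormedType.Exports.
Local Open Scope classical_set_scope.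
Local Open Scope ring_scope.

(* For k >= 3 the step X_k is a function of (X_1, eta_2, eta_k, K_k), and given
   (X_1, X_2) its conditional mean is L = (p - q) (X_1 + X_2) / 2, while two later
   steps are conditionally independent.  Hence the fluctuations X_k - L (k >= 3) are
   orthogonal in L^2, so E[(S_n / n - L)^2] = O(1/n).  This L^2 convergence yields
   convergence in probability, hence in distribution, to the five-atom law of L, as
   well as convergence of the first two moments of S_n / n to those of L.  Every
   expectation involved is a finite sum over the values of the independent driving
   variables. *)

Lemma cvg_inv_poly (R : realType) (u : nat -> R) (m : nat) (a b c : R) :
  (forall n, (m < n)%N -> u n = a + b / n%:R + c / n%:R ^+ 2) ->
  u n @[n --> \oo] --> a.
Proof.
move=> uE.
have inv0 : (n%:R : R)^-1 @[n --> \oo] --> 0.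
  by rewrite -cvg_shiftS /=; exact: cvg_harmonic.
have : a + b * (n%:R : R)^-1 + c * ((n%:R)^-1 * (n%:R)^-1) @[n --> \oo]
         --> a + b * 0 + c * (0 * 0).
  apply: cvgD; first by apply: cvgD; [exact: cvg_cst | apply: cvgM => //; exact: cvg_cst].
  by apply: cvgM; [exact: cvg_cst | exact: cvgM].
rewrite !(mulr0, mul0r, addr0); apply: cvg_trans; apply: near_eq_cvg.
near=> n; rewrite uE -?exprVn ?expr2 //; near: n; exact: nbhs_infty_gt.
Unshelve. all: by end_near.
Qed.

Section probability_lemmas.
Context {d : measure_display} {T : measurableType d} {R : realType}.
Variable P : probability T R.

Definition bounded_mfun (f : T -> R) :=
  measurable_fun setT f /\ exists M : R, forall t, `|f t| <= M.

Lemma bounded_mfun_Lfun1 f : bounded_mfun f -> f \in Lfun P 1.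
Proof.
move=> [mf [M fM]]; apply/Lfun1_integrable/measurable_bounded_integrable => //.
  by rewrite -ge0_fin_numE ?measure_ge0 // fin_num_measure.
apply: filterS (nbhs_pinfty_ge (num_real M)) => M' MM' t _.
exact: le_trans (fM t) MM'.
Qed.

Lemma bounded_mfun_cst c : bounded_mfun (fun=> c).
Proof. by split; [exact: measurable_cst | exists `|c|]. Qed.

Lemma bounded_mfunD f g : bounded_mfun f -> bounded_mfun g ->
  bounded_mfun (fun t => f t + g t).
Proof.
move=> [mf [M fM]] [mg [N gN]]; split; first exact: measurable_funD.
by exists (M + N) => t; apply: le_trans (ler_normD _ _) _; exact: lerD.
Qed.

Lemma bounded_mfunB f g : bounded_mfun f -> bounded_mfun g ->
  bounded_mfun (fun t => f t - g t).
Proof.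
move=> [mf [M fM]] [mg [N gN]]; split; first exact: measurable_funB.
by exists (M + N) => t; apply: le_trans (ler_normB _ _) _; exact: lerD.
Qed.

Lemma bounded_mfunM f g : bounded_mfun f -> bounded_mfun g ->
  bounded_mfun (fun t => f t * g t).
Proof.
move=> [mf [M fM]] [mg [N gN]]; split; first exact: measurable_funM.
by exists (M * N) => t; rewrite normrM; exact: ler_pM.
Qed.

Lemma bounded_mfunX f n : bounded_mfun f -> bounded_mfun (fun t => f t ^+ n).
Proof.
move=> bf; elim: n => [|n IHn]; first by under eq_fun do rewrite expr0; exact: bounded_mfun_cst.
by under eq_fun do rewrite exprS; exact: bounded_mfunM.
Qed.

Lemma bounded_mfun_sum (I : Type) (s : seq I) (F : I -> T -> R) :
  (forall i, bounded_mfun (F i)) -> bounded_mfun (fun t => \sum_(i <- s) F i t).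
Proof.
move=> bF; elim: s => [|i s IHs].
  by under eq_fun do rewrite big_nil; exact: bounded_mfun_cst.
by under eq_fun do rewrite big_cons; exact: bounded_mfunD.
Qed.

Lemma bounded_mfun_indic (A : set T) : measurable A -> bounded_mfun (\1_A).
Proof.
move=> mA; split; first exact: measurable_indic.
by exists 1 => t; rewrite indicE; case: (_ \in _); rewrite ?normr1 ?normr0.
Qed.

(* Only meaningful for integrable [f]: [fine] maps infinite expectations to 0. *)
Definition mean (f : T -> R) : R := fine ('E_P[f])%E.

Lemma meanE f : bounded_mfun f -> ('E_P[f] = (mean f)%:E)%E.
Proof. by move=> bf; rewrite fineK // expectation_fin_num // bounded_mfun_Lfun1. Qed.

Lemma eq_mean f g : f =1 g -> mean f = mean g.
Proof. by move=> /funext ->. Qed.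

Lemma mean_cst c : mean (fun=> c) = c.
Proof. by rewrite /mean expectation_cst. Qed.

Lemma meanD f g : bounded_mfun f -> bounded_mfun g ->
  mean (fun t => f t + g t) = mean f + mean g.
Proof.
move=> bf bg; rewrite /mean (_ : (fun t => _) = f \+ g) //.
by rewrite expectationD ?bounded_mfun_Lfun1 // (meanE bf) (meanE bg).
Qed.

Lemma meanZ k f : bounded_mfun f -> mean (fun t => k * f t) = k * mean f.
Proof.
move=> bf; rewrite /mean (_ : (fun t => _) = k \o* f); last first.
  by apply/funext => t /=; rewrite mulrC.
by rewrite expectationZl ?bounded_mfun_Lfun1 // (meanE bf).
Qed.

Lemma mean_sum (I : Type) (s : seq I) (F : I -> T -> R) :
  (forall i, bounded_mfun (F i)) ->
  mean (fun t => \sum_(i <- s) F i t) = \sum_(i <- s) mean (F i).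
Proof.
move=> bF; elim: s => [|i s IHs].
  by rewrite big_nil (@eq_mean _ (fun=> 0)) ?mean_cst // => t; rewrite big_nil.
rewrite big_cons -IHs -meanD //; last exact: bounded_mfun_sum.
by apply: eq_mean => t; rewrite big_cons.
Qed.

Lemma mean_indic (A : set T) : measurable A -> mean (\1_A) = fine (P A).
Proof. by move=> mA; rewrite /mean expectation_indic. Qed.

Lemma mean_le f g : bounded_mfun f -> bounded_mfun g ->
  (forall t, f t <= g t) -> mean f <= mean g.
Proof.
move=> bf bg fg; rewrite -subr_ge0 -mulN1r -meanZ // -meanD //; last first.
  by apply: bounded_mfunM => //; exact: bounded_mfun_cst.
by apply: fine_ge0; apply: expectation_ge0 => t; rewrite mulN1r subr_ge0.
Qed.

Lemma expectation_ae_eq (f g : T -> R) :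
  measurable_fun setT f -> measurable_fun setT g -> f = g %[ae P] ->
  ('E_P[f] = 'E_P[g])%E.
Proof.
move=> mf mg fg; rewrite unlock; apply: ae_eq_integral => //.
- exact/measurable_EFinP.
- exact/measurable_EFinP.
- exact: (ae_eq_comp EFin fg).
Qed.

Lemma variance_ae_eq (f g : T -> R) :
  measurable_fun setT f -> measurable_fun setT g -> f = g %[ae P] ->
  variance P f = variance P g.
Proof.
move=> mf mg fg; rewrite /variance !covariance.unlock (expectation_ae_eq mf mg fg).
apply: expectation_ae_eq; try by apply: measurable_funM; apply: measurable_funB.
by apply: filterS fg => t fgt _; rewrite !fctE /= fgt.
Qed.

Lemma variance_bounded f : bounded_mfun f ->
  variance P f = (mean (fun t => f t ^+ 2) - mean f ^+ 2)%:E.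
Proof.
move=> bf; have bff := bounded_mfunM bf bf.
rewrite /variance covarianceE ?bounded_mfun_Lfun1 // (meanE bff) (meanE bf).
by rewrite -EFinM -EFinB expr2; congr (_ - _)%:E; apply: eq_mean => t; rewrite expr2.
Qed.

Lemma probability_ae_eq (A B : set T) : measurable A -> measurable B ->
  (\forall t \ae P, A t <-> B t) -> P A = P B.
Proof.
move=> mA mB AB; rewrite -!expectation_indic //.
apply: expectation_ae_eq; [exact: measurable_indic | exact: measurable_indic |].
apply: filterS AB => t AB _; rewrite !indicE (_ : (t \in A) = (t \in B)) //.
by apply/idP/idP => /set_mem/AB/mem_set.
Qed.

Lemma ae_mem_of_probability_sum (U : eqType) (Y : T -> U) (s : seq U) :
  uniq s -> (forall u, measurable [set t | Y t = u]) ->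
  (\sum_(u <- s) P [set t | Y t = u] = 1)%E -> \forall t \ae P, Y t \in s.
Proof.
move=> us mY s1.
have mem_cons (u : U) (s' : seq U) :
    [set t | Y t \in u :: s'] = [set t | Y t = u] `|` [set t | Y t \in s'].
  apply/seteqP; split => t /=; rewrite inE; first by case/orP => [/eqP|]; [left|right].
  by case=> [->|->]; rewrite ?eqxx ?orbT.
have mS (s' : seq U) : measurable [set t | Y t \in s'].
  elim: s' => [|u s' IHs]; first by rewrite (_ : [set t | _] = set0) //; apply/seteqP; split.
  by rewrite mem_cons; exact: measurableU.
have PS (s' : seq U) :
    uniq s' -> P [set t | Y t \in s'] = (\sum_(u <- s') P [set t | Y t = u])%E.
  elim: s' => [_|u s' IHs /= /andP[us' /IHs PS']].
    by rewrite big_nil (_ : [set t | _] = set0) ?measure0 //; apply/seteqP; split.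
  rewrite big_cons -PS' mem_cons measureU //; apply/seteqP; split => t //= [->].
  by rewrite (negbTE us').
apply/negligibleP; first exact/measurableC/mS.
by have := probability_setC P (mS s); rewrite PS // s1 subee.
Qed.

Lemma expectation_discrete (U : eqType) (V : T -> U) (s : seq U) (f : U -> R) :
  uniq s -> (forall u, measurable [set t | V t = u]) ->
  measurable_fun setT (fun t => f (V t)) -> (\forall t \ae P, V t \in s) ->
  ('E_P[fun t => f (V t)] =
    (\sum_(u <- s) f u * fine (P [set t | V t = u]))%:E)%E.
Proof.
move=> us mV mf Vs.
pose F u t := f u * \1_[set t | V t = u] t.
have bF u : bounded_mfun (F u).
  by apply: bounded_mfunM; [exact: bounded_mfun_cst | exact: bounded_mfun_indic].
have bS := bounded_mfun_sum s bF.
rewrite (@expectation_ae_eq _ (fun t => \sum_(u <- s) F u t)) //; last first.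
- apply: filterS Vs => t Vts _; rewrite (bigD1_seq (V t)) //= big1.
    by rewrite /F indicE mem_set // mulr1 addr0.
  by move=> u /negP uV; rewrite /F indicE memNset ?mulr0 // => /esym/eqP.
- exact: bS.1.
rewrite meanE // mean_sum //; congr EFin; apply: eq_bigr => u _.
by rewrite meanZ ?mean_indic //; exact: bounded_mfun_indic.
Qed.

Lemma measurable_eq_cst (f : T -> R) (y : R) :
  measurable_fun setT f -> measurable [set t | f t = y].
Proof. by move=> mf; have := mf measurableT _ (measurable_set1 y); rewrite setTI. Qed.

Lemma measurable_le_cst (f : T -> R) (y : R) :
  measurable_fun setT f -> measurable [set t | f t <= y].
Proof.
move=> mf; have := mf measurableT _ (measurable_itv `]-oo, y]); rewrite setTI.
by congr measurable; apply/seteqP; split => t /=; rewrite in_itv.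
Qed.

Lemma measurable_cst_le (f : T -> R) (y : R) :
  measurable_fun setT f -> measurable [set t | y <= f t].
Proof.
move=> mf; have := mf measurableT _ (measurable_itv `[y, +oo[); rewrite setTI.
by congr measurable; apply/seteqP; split => t /=; rewrite in_itv /= andbT.
Qed.

Lemma chebyshev_mean (Y : T -> R) (e : R) : bounded_mfun Y -> 0 < e ->
  fine (P [set t | e <= `|Y t|]) <= mean (fun t => Y t ^+ 2) / e ^+ 2.
Proof.
move=> bY e0.
have mA : measurable [set t | e <= `|Y t|].
  by apply: measurable_cst_le; apply: measurableT_comp => //; exact: bY.1.
rewrite ler_pdivlMr ?exprn_gt0 // mulrC -mean_indic // -meanZ; last exact: bounded_mfun_indic.
apply: mean_le.
- by apply: bounded_mfunM; [exact: bounded_mfun_cst | exact: bounded_mfun_indic].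
- by apply: bounded_mfunM; exact: bY.
move=> t; rewrite indicE; case: (boolP (t \in _)) => [/set_mem /= eY|_].
  by rewrite mulr1 -(real_normK (num_real (Y t))); apply: lerXn2r; rewrite ?nnegrE ?(ltW e0).
by rewrite mulr0 sqr_ge0.
Qed.

Lemma cdf_le_shift (Y L : T -> R) (x e : R) :
  measurable_fun setT Y -> measurable_fun setT L ->
  fine (P [set t | Y t <= x]) <=
    fine (P [set t | L t <= x + e]) + fine (P [set t | e <= `|Y t - L t|]).
Proof.
move=> mY mL.
have mYx := measurable_le_cst x mY; have mLx := measurable_le_cst (x + e) mL.
have mD : measurable [set t | e <= `|Y t - L t|].
  by apply: measurable_cst_le; apply: measurableT_comp => //; exact: measurable_funB.
rewrite -lee_fin EFinD !fineK ?fin_num_measure //.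
apply: le_trans (measureU2 P mLx mD); apply: le_measure; rewrite ?inE //.
  exact: measurableU.
move=> t /= Yx; case: (lerP e `|Y t - L t|) => [|/ltr_normlP[? ?]]; [right | left] => //.
lra.
Qed.

Lemma cvg_in_probability_in_distribution (Z : nat -> T -> R) (L : T -> R) :
  (forall n, measurable_fun setT (Z n)) -> measurable_fun setT L ->
  (forall e, 0 < e -> fine (P [set t | e <= `|Z n t - L t|]) @[n --> \oo] --> 0) ->
  cvg_in_distribution P Z (fun x => fine (P [set t | L t <= x])).
Proof.
move=> mZ mL ZL x; pose F y := fine (P [set t | L t <= y]); rewrite -/F => Fx.
apply/cvgrPdist_lt => e e0; have e20 : 0 < e / 2 by rewrite divr_gt0.
move/cvgrPdist_lt: Fx => /(_ _ e20) /nbhs_ballP[dd /= dd0 Fdd].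
have de0 : 0 < dd / 2 by rewrite divr_gt0.
have Fr : `|F x - F (x + dd / 2)| < e / 2.
  by apply: Fdd; rewrite /ball /= opprD addNKr normrN gtr0_norm // ltr_pdivrMr // ltr_pMr // ltr1n.
have Fl : `|F x - F (x - dd / 2)| < e / 2.
  by apply: Fdd; rewrite /ball /= opprB addrC subrK gtr0_norm // ltr_pdivrMr // ltr_pMr // ltr1n.
move/cvgrPdist_lt: (ZL _ de0) => /(_ _ e20) ZLe; near=> n.
have /ltr_normlP[Bn _] : `|0 - fine (P [set t | dd / 2 <= `|Z n t - L t|])| < e / 2.
  by near: n.
have B0 : 0 <= fine (P [set t | dd / 2 <= `|Z n t - L t|]) by exact/fine_ge0/measure_ge0.
have upper := cdf_le_shift x (dd / 2) (mZ n) mL.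
have lower := cdf_le_shift (x - dd / 2) (dd / 2) mL (mZ n).
rewrite subrK (_ : [set t | _ <= `|L t - Z n t|] = [set t | dd / 2 <= `|Z n t - L t|])
  in lower; last by apply/seteqP; split => t /=; rewrite distrC.
rewrite -/(F (x + dd / 2)) in upper; rewrite -/(F (x - dd / 2)) in lower.
move/ltr_normlP: Fr => [? ?]; move/ltr_normlP: Fl => [? ?].
rewrite -/(F x); apply/ltr_normlP; split; lra.
Unshelve. all: by end_near.
Qed.

End probability_lemmas.

Definition running_mean {T : Type} {R : realType} (Y : nat -> T -> R) (n : nat) (t : T) : R :=
  (\sum_(1 <= k < n.+1) Y k t) / n%:R.

Lemma bounded_running_mean {d : measure_display} {T : measurableType d} {R : realType}
    (Y : nat -> T -> R) n :
  (forall k, bounded_mfun (Y k)) -> bounded_mfun (running_mean Y n).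
Proof.
by move=> bY; apply: bounded_mfunM; [exact: bounded_mfun_sum | exact: bounded_mfun_cst].
Qed.

(* From index [m + 1] on, the fluctuations [Y k - L] are centred and orthogonal to each
   other, to [L] and to the first [m] steps, and the [Y k] have a common second moment:
   the first two moments of the partial sums are then explicit polynomials in [n]. *)
Section mean_square_limit.
Context {d : measure_display} {T : measurableType d} {R : realType}.
Variables (P : probability T R) (Y : nat -> T -> R) (L : T -> R) (m : nat) (b : R).
Local Notation mean := (mean P).
Hypotheses (bY : forall k, bounded_mfun (Y k)) (bL : bounded_mfun L).
Hypothesis meanY : forall k, (m < k)%N -> mean (Y k) = mean L.
Hypothesis meanYL : forall k, (m < k)%N ->
  mean (fun t => Y k t * L t) = mean (fun t => L t ^+ 2).
Hypothesis meanYY : forall j k, (m < j)%N -> (m < k)%N -> j != k ->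
  mean (fun t => Y j t * Y k t) = mean (fun t => L t ^+ 2).
Hypothesis meanY_init : forall i k, (0 < i <= m)%N -> (m < k)%N ->
  mean (fun t => Y i t * Y k t) = mean (fun t => Y i t * L t).
Hypothesis meanY2 : forall k, (m < k)%N -> mean (fun t => Y k t ^+ 2) = b.

Let S n t := \sum_(1 <= k < n.+1) Y k t.

Let bS n : bounded_mfun (S n).
Proof. exact: bounded_mfun_sum. Qed.

Let S_recr n : S n.+1 =1 (fun t => S n t + Y n.+1 t).
Proof. by move=> t; rewrite /S big_nat_recr. Qed.

Ltac bounded := repeat first
  [ exact: bY | exact: bL | exact: bS | exact: bounded_mfun_cst
  | apply: bounded_mfunD | apply: bounded_mfunM | apply: bounded_mfunX ].

Let mean_S n : (m <= n)%N -> mean (S n) = mean (S m) + (n%:R - m%:R) * mean L.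
Proof.
move=> /subnKC <-; elim: (n - m)%N => [|i IHi]; first by rewrite addn0 subrr mul0r addr0.
rewrite addnS; under eq_mean do rewrite S_recr.
rewrite meanD // IHi meanY ?ltnS ?leq_addr //.
by rewrite -natr1 natrD; ring.
Qed.

Let mean_SL n : (m <= n)%N -> mean (fun t => S n t * L t) =
  mean (fun t => S m t * L t) + (n%:R - m%:R) * mean (fun t => L t ^+ 2).
Proof.
move=> /subnKC <-; elim: (n - m)%N => [|i IHi]; first by rewrite addn0 subrr mul0r addr0.
rewrite addnS; under eq_mean do rewrite S_recr mulrDl.
rewrite meanD; [|bounded..].
by rewrite IHi meanYL ?ltnS ?leq_addr // -natr1 natrD; ring.
Qed.

Let mean_SY n k : (m <= n)%N -> (n < k)%N -> mean (fun t => S n t * Y k t) =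
  mean (fun t => S m t * L t) + (n%:R - m%:R) * mean (fun t => L t ^+ 2).
Proof.
move=> /subnKC <-; elim: (n - m)%N => [|i IHi] ik.
  rewrite addn0 subrr mul0r addr0 in ik *.
  under eq_mean do rewrite /S big_distrl.
  rewrite mean_sum; last by move=> i; bounded.
  under eq_big_nat => i /andP[i0 im] do rewrite meanY_init ?i0 //.
  rewrite -mean_sum; last by move=> i; bounded.
  by apply: eq_mean => t; rewrite /S big_distrl.
rewrite addnS; under eq_mean do rewrite S_recr mulrDl.
rewrite meanD; [|bounded..].
rewrite IHi ?meanYY; try lia.
by rewrite -natr1 natrD; ring.
Qed.

Let mean_S2 n : (m <= n)%N -> mean (fun t => S n t ^+ 2) =
  mean (fun t => S m t ^+ 2) + (n%:R - m%:R) * (b + 2 * mean (fun t => S m t * L t))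
  + (n%:R - m%:R) * (n%:R - m%:R - 1) * mean (fun t => L t ^+ 2).
Proof.
move=> /subnKC <-; elim: (n - m)%N => [|i IHi]; first by rewrite addn0 subrr !mul0r !addr0.
rewrite addnS (_ : (fun t => _) = fun t =>
    S (m + i) t ^+ 2 + (2 * (S (m + i) t * Y (m + i).+1 t) + Y (m + i).+1 t ^+ 2)); last first.
  by apply/funext => t; rewrite S_recr; ring.
rewrite !meanD ?meanZ; [|bounded..].
rewrite IHi mean_SY ?meanY2; try lia.
by rewrite -natr1 natrD; ring.
Qed.

Local Notation Z := (running_mean Y).

Lemma running_mean_cvg_mean : mean (Z n) @[n --> \oo] --> mean L.
Proof.
apply: (@cvg_inv_poly _ _ m _ (mean (S m) - m%:R * mean L) 0) => n mn.
have n0 : n%:R != 0 :> R by rewrite pnatr_eq0 -lt0n (leq_ltn_trans _ mn).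
rewrite (_ : Z n = fun t => n%:R^-1 * S n t); last first.
  by apply/funext => t; rewrite /running_mean mulrC.
by rewrite meanZ // mean_S ?(ltnW mn) //; field.
Qed.

Let running_mean_cvg_cross :
  mean (fun t => Z n t * L t) @[n --> \oo] --> mean (fun t => L t ^+ 2).
Proof.
apply: (@cvg_inv_poly _ _ m _
  (mean (fun t => S m t * L t) - m%:R * mean (fun t => L t ^+ 2)) 0) => n mn.
have n0 : n%:R != 0 :> R by rewrite pnatr_eq0 -lt0n (leq_ltn_trans _ mn).
rewrite (_ : (fun t => _) = fun t => n%:R^-1 * (S n t * L t)); last first.
  by apply/funext => t; rewrite /running_mean -/(S n t); field.
by rewrite meanZ; [rewrite mean_SL ?(ltnW mn) //; field | bounded].
Qed.

Lemma running_mean_cvg_second_moment :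
  mean (fun t => Z n t ^+ 2) @[n --> \oo] --> mean (fun t => L t ^+ 2).
Proof.
set c := mean (fun t => L t ^+ 2); set B := b + 2 * mean (fun t => S m t * L t).
apply: (@cvg_inv_poly _ _ m _ (B - (2 * m%:R + 1) * c)
  (mean (fun t => S m t ^+ 2) - m%:R * B + m%:R * (m%:R + 1) * c)) => n mn.
have n0 : n%:R != 0 :> R by rewrite pnatr_eq0 -lt0n (leq_ltn_trans _ mn).
rewrite (_ : (fun t => _) = fun t => (n%:R ^+ 2)^-1 * S n t ^+ 2); last first.
  by apply/funext => t; rewrite /running_mean -/(S n t); field.
by rewrite meanZ; [rewrite mean_S2 ?(ltnW mn) // /c /B; field | bounded].
Qed.

Lemma running_mean_cvg_L2 : mean (fun t => (Z n t - L t) ^+ 2) @[n --> \oo] --> 0.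
Proof.
set c := mean (fun t => L t ^+ 2).
have bZ n : bounded_mfun (Z n) by exact: bounded_running_mean.
rewrite (_ : (fun n => _) = fun n =>
    mean (fun t => Z n t ^+ 2) + (-2) * mean (fun t => Z n t * L t) + c); last first.
  apply/funext => n; rewrite -meanZ; [|bounded].
  rewrite -!meanD; [|bounded..].
  by apply: eq_mean => t; ring.
rewrite (_ : 0 = c + -2 * c + c); last by ring.
apply: cvgD; last exact: cvg_cst.
apply: cvgD; first exact: running_mean_cvg_second_moment.
by apply: cvgM; [exact: cvg_cst | exact: running_mean_cvg_cross].
Qed.

End mean_square_limit.

Section signs.
Variable R : realType.

Definition signs : seq R := [:: 1; -1; 0].

Definition clip (x : R) : R := if x == 1 then 1 else if x == -1 then -1 else 0.

Lemma uniq_signs : uniq signs.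
Proof.
rewrite /= !inE !negb_or andbT.
by apply/andP; split; [apply/andP; split|]; apply/negP => /eqP; lra.
Qed.

Lemma eqN11 : (-1 == 1 :> R) = false.
Proof. by apply/negbTE/negP => /eqP; lra. Qed.

Lemma eq01 : (0 == 1 :> R) = false.
Proof. by rewrite eq_sym oner_eq0. Qed.

Lemma eq0N1 : (0 == -1 :> R) = false.
Proof. by rewrite eq_sym oppr_eq0 oner_eq0. Qed.

Lemma clip1 : clip 1 = 1.
Proof. by rewrite /clip eqxx. Qed.

Lemma clipN1 : clip (-1) = -1.
Proof. by rewrite /clip eqN11 eqxx. Qed.

Lemma clip0 : clip 0 = 0.
Proof. by rewrite /clip eq01 eq0N1. Qed.

Lemma clip_id x : x \in signs -> clip x = x.
Proof. by rewrite !inE => /or3P[]/eqP->; rewrite ?clip1 ?clipN1 ?clip0. Qed.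

Lemma clip_le1 x : `|clip x| <= 1.
Proof. by rewrite /clip; repeat case: ifP => _; rewrite ?normrN ?normr1 ?normr0. Qed.

Lemma clipM_le1 a b : `|b| <= 1 -> `|clip a * b| <= 1.
Proof. by move=> b1; rewrite normrM -[1]mulr1; apply: ler_pM => //; exact: clip_le1. Qed.

Lemma measurable_clip : measurable_fun setT clip.
Proof.
by do 2 (apply: measurable_fun_ifT => //; first exact: measurable_fun_eqr).
Qed.

End signs.

Section elephant_random_walk.
Context {d : measure_display} {T : measurableType d} {R : realType}.
Variables (P : probability T R) (p q r : R).
Variables (X1 : T -> R) (eta : nat -> T -> R) (K : nat -> T -> nat).
Hypotheses (pqr1 : p + q + r = 1)
  (mX1 : measurable_fun setT X1)
  (meta : forall n, (2 <= n)%N -> measurable_fun setT (eta n))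
  (mK : forall n k, (3 <= n)%N -> measurable [set t | K n t = k])
  (PX1_1 : P [set t | X1 t = 1] = p%:E)
  (PX1_N1 : P [set t | X1 t = -1] = q%:E)
  (PX1_0 : P [set t | X1 t = 0] = r%:E)
  (Peta : forall n, (2 <= n)%N ->
     [/\ P [set t | eta n t = 1] = p%:E,
         P [set t | eta n t = -1] = q%:E &
         P [set t | eta n t = 0] = r%:E])
  (PK : forall n, (3 <= n)%N ->
     P [set t | K n t = 1%N] = (2^-1)%:E /\ P [set t | K n t = 2%N] = (2^-1)%:E)
  (indep : erw_independent P X1 eta K).
Local Notation mean := (mean P).

Definition sign_law (v : R) : R := if v == 1 then p else if v == -1 then q else r.

Definition Esign (f : R -> R) : R := \sum_(v <- signs R) f v * sign_law v.

Definition choices : seq nat := [:: 1; 2]%N.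

Definition Echoice (f : nat -> R) : R := \sum_(x <- choices) f x * 2^-1.

Lemma EsignE f : Esign f = f 1 * p + f (-1) * q + f 0 * r.
Proof.
by rewrite /Esign /sign_law !big_cons big_nil eqxx eqN11 eqxx eq01 eq0N1 addr0 addrA.
Qed.

Lemma EchoiceE f : Echoice f = (f 1%N + f 2%N) / 2.
Proof. by rewrite /Echoice !big_cons big_nil addr0 mulrDl. Qed.

Lemma Esign_cst c : Esign (fun=> c) = c.
Proof. by rewrite EsignE -!mulrDr pqr1 mulr1. Qed.

Lemma Echoice_cst c : Echoice (fun=> c) = c.
Proof. by rewrite EchoiceE; field. Qed.

Lemma prob_X1 v : v \in signs R -> P [set t | X1 t = v] = (sign_law v)%:E.
Proof.
by rewrite !inE /sign_law => /or3P[]/eqP->;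
  rewrite ?eqxx ?eqN11 ?eq01 ?eq0N1 ?PX1_1 ?PX1_N1 ?PX1_0.
Qed.

Lemma prob_eta n v : (2 <= n)%N -> v \in signs R ->
  P [set t | eta n t = v] = (sign_law v)%:E.
Proof.
move=> /Peta[eta1 etaN1 eta0]; rewrite !inE /sign_law => /or3P[]/eqP->;
  by rewrite ?eqxx ?eqN11 ?eq01 ?eq0N1 ?eta1 ?etaN1 ?eta0.
Qed.

Lemma prob_K n x : (3 <= n)%N -> x \in choices -> P [set t | K n t = x] = (2^-1)%:E.
Proof. by move=> /PK[K1 K2]; rewrite !inE => /orP[]/eqP->; rewrite ?K1 ?K2. Qed.

Lemma ae_X1 : \forall t \ae P, X1 t \in signs R.
Proof.
apply: ae_mem_of_probability_sum (uniq_signs R) (fun v => measurable_eq_cst v mX1) _.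
by rewrite !big_cons big_nil PX1_1 PX1_N1 PX1_0 adde0 -!EFinD addrA pqr1.
Qed.

Lemma ae_eta n : (2 <= n)%N -> \forall t \ae P, eta n t \in signs R.
Proof.
move=> n2; have [eta1 etaN1 eta0] := Peta n2.
apply: ae_mem_of_probability_sum (uniq_signs R) (fun v => measurable_eq_cst v (meta n2)) _.
by rewrite !big_cons big_nil eta1 etaN1 eta0 adde0 -!EFinD addrA pqr1.
Qed.

Lemma ae_K n : (3 <= n)%N -> \forall t \ae P, K n t \in choices.
Proof.
move=> n3; have [K1 K2] := PK n3.
apply: (@ae_mem_of_probability_sum _ _ _ P _ (K n) choices) => //; first by move=> k; exact: mK.
by rewrite !big_cons big_nil K1 K2 adde0 -EFinD (_ : 2^-1 + 2^-1 = 1 :> R) //; field.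
Qed.

Definition cell j k t := (X1 t, eta 2 t, eta j t, K j t, eta k t, K k t).

Definition cells : seq (R * R * R * nat * R * nat) :=
  [seq (c, x') | c <- [seq (c, u') | c <- [seq (c, x) | c <- [seq (c, u) | c <-
    [seq (a, e) | a <- signs R, e <- signs R], u <- signs R], x <- choices],
    u' <- signs R], x' <- choices].

Lemma cell_setE j k a e u x u' x' :
  [set t | cell j k t = (a, e, u, x, u', x')] =
  [set t | X1 t = a] `&` ([set t | eta 2 t = e] `&` ([set t | eta j t = u] `&`
  ([set t | K j t = x] `&` ([set t | eta k t = u'] `&` [set t | K k t = x'])))).
Proof.
apply/seteqP; split => t; rewrite /cell /=; first by case=> -> -> -> -> -> ->.
by case=> -> [-> [-> [-> [-> ->]]]].
Qed.

Lemma measurable_cell j k c : (3 <= j)%N -> (3 <= k)%N ->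
  measurable [set t | cell j k t = c].
Proof.
move=> j3 k3; case: c => [[[[[a e] u] x] u'] x']; rewrite cell_setE.
by repeat apply: measurableI; first [ exact: measurable_eq_cst mX1
  | apply: measurable_eq_cst; apply: meta; lia | apply: mK; lia ].
Qed.

Lemma prob_cell j k a e u x u' x' : (3 <= j)%N -> (3 <= k)%N -> j != k ->
  P [set t | cell j k t = (a, e, u, x, u', x')] =
  (P [set t | X1 t = a] * (P [set t | eta 2 t = e] * (P [set t | eta j t = u] *
  (P [set t | K j t = x] * (P [set t | eta k t = u'] * P [set t | K k t = x'])))))%E.
Proof.
move=> j3 k3 jk.
have [j2 k2 kj] : [/\ (j == 2) = false, (k == 2) = false & (k == j) = false]%N.
  by split; apply/negbTE; lia.
pose J : seq erw_index :=
  [:: None; Some (inl 2%N); Some (inl j); Some (inr j); Some (inl k); Some (inr k)].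
pose A (i : erw_index) : set T := match i with
  | None => [set t | X1 t = a]
  | Some (inl n) => if n == 2%N then [set t | eta 2 t = e]
                    else if n == j then [set t | eta j t = u] else [set t | eta k t = u']
  | Some (inr n) => if n == j then [set t | K j t = x] else [set t | K k t = x']
  end.
have uJ : uniq J.
  by rewrite /J /= !inE !eqE /= !eqE /= !orbF ![(2%N == _)]eq_sym j2 k2 jk.
have vJ : all erw_valid J by rewrite /= j3 k3 (ltnW j3) (ltnW k3).
have eJ i : i \in J -> erw_events X1 eta K i (A i).
  have level_real (Y : T -> R) v : sigma_real Y [set t | Y t = v].
    by exists [set v]; [exact: measurable_set1|].
  have level_nat (Y : T -> nat) v : sigma_nat Y [set t | Y t = v] by exists [set v].
  rewrite /J !inE => /or4P[|||/or3P[||]] /eqP-> /=; rewrite ?eqxx ?j2 ?k2 ?kj;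
    first [exact: level_real | exact: level_nat].
have := indep uJ vJ eJ.
by rewrite /J !big_cons !big_nil /A eqxx j2 k2 kj eqxx setIT mule1 cell_setE.
Qed.

Lemma expectation_two_steps j k (g : R -> R -> R -> nat -> R -> nat -> R) :
  (3 <= j)%N -> (3 <= k)%N -> j != k ->
  measurable_fun setT (fun t => g (X1 t) (eta 2 t) (eta j t) (K j t) (eta k t) (K k t)) ->
  ('E_P[fun t => g (X1 t) (eta 2 t) (eta j t) (K j t) (eta k t) (K k t)] =
   (Esign (fun a => Esign (fun e => Esign (fun u => Echoice (fun x =>
      Esign (fun u' => Echoice (fun x' => g a e u x u' x')))))))%:E)%E.
Proof.
move=> j3 k3 jk mg.
pose G (c : R * R * R * nat * R * nat) := let: (a, e, u, x, u', x') := c in g a e u x u' x'.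
have uniq_cells : uniq cells.
  have pair_inj (A B : eqType) (s1 : seq A) (s2 : seq B) :
      {in [seq (a, b) | a <- s1, b <- s2] &, injective (uncurry (@pair A B))}.
    by move=> [? ?] [? ?] _ _ /= [-> ->].
  by repeat apply: allpairs_uniq => //; exact: uniq_signs.
have ae_cells : \forall t \ae P, cell j k t \in cells.
  near=> t; rewrite /cells /cell; (repeat apply: allpairs_f); near: t;
    first [exact: ae_X1 | apply: ae_eta; lia | apply: ae_K; lia].
rewrite (_ : (fun t => _) = fun t => G (cell j k t)) //.
rewrite (expectation_discrete uniq_cells _ mg ae_cells); last first.
  by move=> c; exact: measurable_cell.
congr EFin; rewrite /cells !big_allpairs /Esign /Echoice.
apply: eq_big_seq => a sa; rewrite !big_distrl; apply: eq_big_seq => e se; rewrite !big_distrl.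
apply: eq_big_seq => u su; rewrite !big_distrl; apply: eq_big_seq => x cx; rewrite !big_distrl.
apply: eq_big_seq => u' su'; rewrite !big_distrl; apply: eq_big_seq => x' cx' /=.
rewrite prob_cell // prob_X1 // !prob_eta ?prob_K //; try lia.
by rewrite -!EFinM /=; ring.
Unshelve. all: by end_near.
Qed.

Definition Estep (g : R -> R -> R -> nat -> R) (a e : R) : R :=
  Esign (fun u => Echoice (fun x => g a e u x)).

Lemma expectation_one_step k (g : R -> R -> R -> nat -> R) : (3 <= k)%N ->
  measurable_fun setT (fun t => g (X1 t) (eta 2 t) (eta k t) (K k t)) ->
  ('E_P[fun t => g (X1 t) (eta 2 t) (eta k t) (K k t)] =
   (Esign (fun a => Esign (fun e => Estep g a e)))%:E)%E.
Proof.
move=> k3 mg.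
(* the step [k.+1] is a dummy *)
rewrite (@expectation_two_steps k k.+1 (fun a e u x _ _ => g a e u x) k3 (leqW k3)
  (negbT (ltn_eqF (ltnSn k))) mg).
congr EFin; congr Esign; apply/funext => a; congr Esign; apply/funext => e.
rewrite /Estep; congr Esign; apply/funext => u; congr Echoice; apply/funext => x.
by rewrite Echoice_cst Esign_cst.
Qed.

Lemma expectation_initial (g : R -> R -> R) :
  measurable_fun setT (fun t => g (X1 t) (eta 2 t)) ->
  ('E_P[fun t => g (X1 t) (eta 2 t)] = (Esign (fun a => Esign (fun e => g a e)))%:E)%E.
Proof.
move=> mg; rewrite (@expectation_one_step 3 (fun a e _ _ => g a e)) //.
congr EFin; congr Esign; apply/funext => a; congr Esign; apply/funext => e.
by rewrite /Estep Echoice_cst Esign_cst.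
Qed.

Lemma expectation_two_steps_mul j k (g h : R -> R -> R -> nat -> R) :
  (3 <= j)%N -> (3 <= k)%N -> j != k ->
  measurable_fun setT (fun t =>
    g (X1 t) (eta 2 t) (eta j t) (K j t) * h (X1 t) (eta 2 t) (eta k t) (K k t)) ->
  ('E_P[fun t => (g (X1 t) (eta 2 t) (eta j t) (K j t) * h (X1 t) (eta 2 t) (eta k t) (K k t))%R]
   = (Esign (fun a => Esign (fun e => Estep g a e * Estep h a e)))%:E)%E.
Proof.
move=> j3 k3 jk mgh.
rewrite (@expectation_two_steps j k (fun a e u x u' x' => g a e u x * h a e u' x')) //.
congr EFin; congr Esign; apply/funext => a; congr Esign; apply/funext => e.
by rewrite /Estep; do 3 rewrite ?EsignE ?EchoiceE /=; ring.
Qed.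

Definition step (a e u : R) (x : nat) : R :=
  clip u * (if x == 1%N then clip a else if x == 2%N then clip e * clip a else 0).

Definition drift (a e : R) : R := (p - q) * (clip a + clip e * clip a) / 2.

Lemma Estep_step a e : Estep step a e = drift a e.
Proof. by rewrite /Estep EsignE /= !EchoiceE /step /drift /= clip1 clipN1 clip0; ring. Qed.

Lemma Estep_mull (h : R -> R -> R) g a e :
  Estep (fun a e u x => h a e * g a e u x) a e = h a e * Estep g a e.
Proof. by rewrite /Estep !EsignE /= !EchoiceE; ring. Qed.

(* The walk driven by [clip \o X1] and [clip \o eta n]: it coincides with the
   original walk almost surely and is bounded, hence has finite moments. *)
Definition Xc : nat -> T -> R := erw_X (fun t => clip (X1 t)) (fun n t => clip (eta n t)) K.

(* The limit of [S_n / n]; it is the conditional mean of each later step (Estep_step). *)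
Definition Xlim (t : T) : R := drift (X1 t) (eta 2 t).

Lemma Xc_stepE k : (3 <= k)%N -> Xc k = fun t => step (X1 t) (eta 2 t) (eta k t) (K k t).
Proof. by case: k => [|[|[|k]]]. Qed.

Lemma measurable_erw_X (Y1 : T -> R) (E : nat -> T -> R) n :
  measurable_fun setT Y1 -> (forall n, (2 <= n)%N -> measurable_fun setT (E n)) ->
  measurable_fun setT (erw_X Y1 E K n).
Proof.
move=> mY mE; case: n => [|[|[|n]]]; rewrite /erw_X.
- exact: measurable_cst.
- exact: mY.
- exact: measurable_funM (mE 2%N _) mY.
have mKb k : measurable_fun setT (fun t => K n.+3 t == k).
  apply: (measurable_fun_bool true); rewrite setTI.
  rewrite (_ : _ @^-1` _ = [set t | K n.+3 t = k]); first exact: mK.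
  by apply/seteqP; split => t /= /eqP.
apply: measurable_funM; first exact: mE.
apply: measurable_fun_ifT; [exact: mKb | exact: mY |].
apply: measurable_fun_ifT; [exact: mKb | exact: measurable_funM (mE 2%N _) mY |].
exact: measurable_cst.
Qed.

Lemma bounded_Xc n : bounded_mfun (Xc n).
Proof.
split.
  apply: measurable_erw_X => [|m m2]; apply: measurableT_comp; try exact: measurable_clip.
    exact: mX1.
  exact: meta.
exists 1 => t; case: n => [|[|[|n]]]; rewrite /Xc /erw_X ?normr0 ?clip_le1 //.
  by apply: clipM_le1; exact: clip_le1.
apply: clipM_le1; case: ifP => _; first exact: clip_le1.
by case: ifP => _; rewrite ?normr0 //; apply: clipM_le1; exact: clip_le1.
Qed.

Lemma bounded_Xlim : bounded_mfun Xlim.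
Proof.
rewrite (_ : Xlim = fun t => (p - q) / 2 * (Xc 1 t + Xc 2 t)); last first.
  by apply/funext => t; rewrite /Xlim /drift /Xc /erw_X; ring.
by apply: bounded_mfunM; [exact: bounded_mfun_cst | apply: bounded_mfunD; exact: bounded_Xc].
Qed.

Lemma mean_mul_Xc (h : R -> R -> R) k : (3 <= k)%N ->
  measurable_fun setT (fun t => h (X1 t) (eta 2 t)) ->
  mean (fun t => h (X1 t) (eta 2 t) * Xc k t) = mean (fun t => h (X1 t) (eta 2 t) * Xlim t).
Proof.
move=> k3 mh; have mhX := measurable_funM mh (bounded_Xc k).1.
have mhL := measurable_funM mh bounded_Xlim.1.
rewrite (Xc_stepE k3) in mhX *.
rewrite /mean (@expectation_one_step k (fun a e u x => h a e * step a e u x)) //.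
rewrite (@expectation_initial (fun a e => h a e * drift a e)) //.
by congr (fine _%:E); congr Esign; apply/funext => a; congr Esign; apply/funext => e;
  rewrite Estep_mull Estep_step.
Qed.

Lemma mean_Xc_Xc j k : (3 <= j)%N -> (3 <= k)%N -> j != k ->
  mean (fun t => Xc j t * Xc k t) = mean (fun t => Xlim t ^+ 2).
Proof.
move=> j3 k3 jk; have mXX := measurable_funM (bounded_Xc j).1 (bounded_Xc k).1.
have mL2 := (bounded_mfunX 2 bounded_Xlim).1.
rewrite (Xc_stepE j3) (Xc_stepE k3) in mXX *.
rewrite /mean (@expectation_two_steps_mul j k step step) //.
rewrite (@expectation_initial (fun a e => drift a e ^+ 2)) //.
by congr (fine _%:E); congr Esign; apply/funext => a; congr Esign; apply/funext => e;
  rewrite Estep_step expr2.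
Qed.

Lemma mean_Xc2 k : (3 <= k)%N -> mean (fun t => Xc k t ^+ 2) = mean (fun t => Xc 3 t ^+ 2).
Proof.
move=> k3; have mk := (bounded_mfunX 2 (bounded_Xc k)).1.
have m3 := (bounded_mfunX 2 (bounded_Xc 3)).1.
rewrite (Xc_stepE k3) (Xc_stepE (leqnn 3)) in mk m3 *.
rewrite /mean (@expectation_one_step k (fun a e u x => step a e u x ^+ 2)) //.
by rewrite (@expectation_one_step 3 (fun a e u x => step a e u x ^+ 2)).
Qed.

Lemma mean_Xlim : mean Xlim = (p - q) ^+ 2 / 2 * (1 + (p - q)).
Proof.
have r_pq : r = 1 - p - q by rewrite -pqr1; ring.
rewrite /mean (@expectation_initial drift) //=; last exact: bounded_Xlim.1.
by rewrite !EsignE /drift clip1 clipN1 clip0 r_pq; ring.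
Qed.

Lemma variance_Xlim : mean (fun t => Xlim t ^+ 2) - mean Xlim ^+ 2 =
  (p - q) ^+ 2 / 4 * ((p + q) * (1 + 3 * p - q) - (p - q) ^+ 2 * (1 + (p - q)) ^+ 2).
Proof.
have r_pq : r = 1 - p - q by rewrite -pqr1; ring.
rewrite mean_Xlim /mean (@expectation_initial (fun a e => drift a e ^+ 2)) /=; last first.
  exact: (bounded_mfunX 2 bounded_Xlim).1.
by rewrite !EsignE /drift clip1 clipN1 clip0 r_pq; field.
Qed.

Lemma cdf_Xlim y : fine (P [set t | Xlim t <= y]) = erw_limit_cdf p q r y.
Proof.
have r_pq : r = 1 - p - q by rewrite -pqr1; ring.
have mA := measurable_le_cst y bounded_Xlim.1.
have indE : \1_[set t | Xlim t <= y] = fun t => ((drift (X1 t) (eta 2 t) <= y)%R)%:R :> R.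
  by apply/funext => t; rewrite indicE; case: (boolP (Xlim t <= y)) => h;
    [rewrite mem_set | rewrite memNset //= => h'; rewrite h' in h].
rewrite -(expectation_indic P mA) indE
  (@expectation_initial (fun a e => ((drift a e <= y)%R)%:R)) /=; last first.
  by rewrite -indE; exact: measurable_indic.
have d11 : drift 1 1 = p - q by rewrite /drift clip1; field.
have d1N : drift 1 (-1) = 0 by rewrite /drift clip1 clipN1; field.
have d10 : drift 1 0 = (p - q) / 2 by rewrite /drift clip1 clip0; field.
have dN1 : drift (-1) 1 = - (p - q) by rewrite /drift clip1 clipN1; field.
have dNN : drift (-1) (-1) = 0 by rewrite /drift clipN1; field.
have dN0 : drift (-1) 0 = - ((p - q) / 2) by rewrite /drift clipN1 clip0; field.
have d0 e : drift 0 e = 0 by rewrite /drift clip0; field.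
rewrite !EsignE d11 d1N d10 dN1 dNN dN0 !d0 /erw_limit_cdf.
by case: (p - q <= y); case: ((p - q) / 2 <= y); case: (0 <= y);
  case: (- ((p - q) / 2) <= y); case: (- (p - q) <= y); rewrite /= r_pq; ring.
Qed.

Lemma mean_Xc k : (3 <= k)%N -> mean (Xc k) = mean Xlim.
Proof.
move=> k3; rewrite -(eq_mean _ (fun t => mul1r (Xc k t))) -(eq_mean _ (fun t => mul1r (Xlim t))).
by apply: (@mean_mul_Xc (fun _ _ => 1)) => //; exact: measurable_cst.
Qed.

Lemma mean_Xc_Xlim k : (3 <= k)%N ->
  mean (fun t => Xc k t * Xlim t) = mean (fun t => Xlim t ^+ 2).
Proof.
move=> k3; rewrite (eq_mean _ (fun t => mulrC (Xc k t) (Xlim t))).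
by rewrite (@mean_mul_Xc drift) //; exact: bounded_Xlim.1.
Qed.

Lemma mean_init_Xc i k : (0 < i <= 2)%N -> (3 <= k)%N ->
  mean (fun t => Xc i t * Xc k t) = mean (fun t => Xc i t * Xlim t).
Proof.
case: i => [|[|[|i]]] // _ k3.
- by apply: (@mean_mul_Xc (fun a _ => clip a)) => //; exact: (bounded_Xc 1).1.
- by apply: (@mean_mul_Xc (fun a e => clip e * clip a)) => //; exact: (bounded_Xc 2).1.
Qed.

Ltac running_mean_hyps := first
  [ exact: bounded_Xc | exact: bounded_Xlim | exact: mean_Xc | exact: mean_Xc_Xlim
  | exact: mean_Xc_Xc | exact: mean_init_Xc | exact: mean_Xc2 ].

Lemma measurable_running_mean_erw n : measurable_fun setT (running_mean (erw_X X1 eta K) n).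
Proof.
apply: measurable_funM => //; apply: measurable_sum => k.
exact: measurable_erw_X.
Qed.

Lemma ae_running_mean_erw n : running_mean (erw_X X1 eta K) n = running_mean Xc n %[ae P].
Proof.
have ae_eta_all : \forall t \ae P, forall n, (2 <= n)%N -> eta n t \in signs R.
  apply: ae_foralln => m; case: (leqP 2 m) => [m2|m1].
    by apply: filterS (ae_eta m2) => t.
  by apply: aeW => t m2; exfalso; lia.
apply: filterS2 ae_X1 ae_eta_all => t X1s etas _.
rewrite /running_mean; congr (_ / _); apply: eq_bigr => -[|[|[|k]]] _ //=.
- by rewrite clip_id.
- by rewrite !clip_id // etas.
- by rewrite !clip_id ?etas.
Qed.

Lemma erw_cvg_in_probability e : 0 < e ->
  fine (P [set t | e <= `|running_mean (erw_X X1 eta K) n t - Xlim t|]) @[n --> \oo] --> 0.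
Proof.
move=> e0; set Zc := running_mean Xc.
have mdist (Z : nat -> T -> R) n : measurable_fun setT (Z n) ->
    measurable [set t | e <= `|Z n t - Xlim t|].
  move=> mZ; apply: measurable_cst_le; apply: measurableT_comp => //.
  exact: measurable_funB mZ bounded_Xlim.1.
apply: (@squeeze_cvgr _ _ _ _ (cst 0)
  (fun n => mean (fun t => (Zc n t - Xlim t) ^+ 2) / e ^+ 2)).
- near=> n; apply/andP; split; first exact/fine_ge0/measure_ge0.
  rewrite (@probability_ae_eq _ _ _ _ _ [set t | e <= `|Zc n t - Xlim t|]).
  + apply: chebyshev_mean => //; apply: bounded_mfunB; last exact: bounded_Xlim.
    exact: bounded_running_mean bounded_Xc.
  + exact/mdist/measurable_running_mean_erw.
  + exact/mdist/(bounded_running_mean n bounded_Xc).1.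
  + by apply: filterS (ae_running_mean_erw n) => t /(_ I) E /=; rewrite E.
- exact: cvg_cst.
- rewrite -(mul0r (e ^+ 2)^-1); apply: cvgM; last exact: cvg_cst.
  by apply: running_mean_cvg_L2; running_mean_hyps.
Unshelve. all: by end_near.
Qed.

Lemma erw_cvg_in_distribution :
  cvg_in_distribution P (running_mean (erw_X X1 eta K)) (erw_limit_cdf p q r).
Proof.
rewrite (_ : erw_limit_cdf p q r = fun y => fine (P [set t | Xlim t <= y])); last first.
  by apply/funext => y; rewrite cdf_Xlim.
apply: cvg_in_probability_in_distribution; first exact: measurable_running_mean_erw.
  exact: bounded_Xlim.1.
exact: erw_cvg_in_probability.
Qed.

Lemma erw_mean_cvg :
  ('E_P[running_mean (erw_X X1 eta K) n] @[n --> \oo] -->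
    ((p - q) ^+ 2 / 2 * (1 + (p - q)))%:E)%E.
Proof.
rewrite -mean_Xlim (_ : (fun n => _) = fun n => (mean (running_mean Xc n))%:E); last first.
  apply/funext => n; rewrite (expectation_ae_eq (measurable_running_mean_erw n)
    (bounded_running_mean n bounded_Xc).1 (ae_running_mean_erw n)).
  exact: meanE (bounded_running_mean n bounded_Xc).
apply: cvg_EFin; first exact: nearW.
by apply: running_mean_cvg_mean; running_mean_hyps.
Qed.

Lemma erw_variance_cvg :
  (variance P (running_mean (erw_X X1 eta K) n) @[n --> \oo] -->
     ((p - q) ^+ 2 / 4 *
       ((p + q) * (1 + 3 * p - q) - (p - q) ^+ 2 * (1 + (p - q)) ^+ 2))%:E)%E.
Proof.
rewrite -variance_Xlim.
rewrite (_ : (fun n => _) = fun n => (mean (fun t => running_mean Xc n t ^+ 2)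
    - mean (running_mean Xc n) ^+ 2)%:E); last first.
  apply/funext => n; rewrite (variance_ae_eq (measurable_running_mean_erw n)
    (bounded_running_mean n bounded_Xc).1 (ae_running_mean_erw n)).
  exact: variance_bounded (bounded_running_mean n bounded_Xc).
apply: cvg_EFin; first exact: nearW.
apply: cvgB; first by apply: running_mean_cvg_second_moment; running_mean_hyps.
by apply: cvgM; apply: running_mean_cvg_mean; running_mean_hyps.
Qed.

End elephant_random_walk.

Unset Implicit Arguments.

Theorem theorem6p1 (d : measure_display) (T : measurableType d) (R : realType)
  (P : probability T R) (p q r : R)
  (X1 : T -> R) (eta : nat -> T -> R) (K : nat -> T -> nat) :
  0 < p < 1 -> 0 < q < 1 -> 0 < r < 1 -> p + q + r = 1 ->
  measurable_fun setT X1 ->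
  (forall n, (2 <= n)%N -> measurable_fun setT (eta n)) ->
  (forall n k, (3 <= n)%N -> measurable [set t | K n t = k]) ->
  P [set t | X1 t = 1] = p%:E ->
  P [set t | X1 t = -1] = q%:E ->
  P [set t | X1 t = 0] = r%:E ->
  (forall n, (2 <= n)%N ->
     [/\ P [set t | eta n t = 1] = p%:E,
         P [set t | eta n t = -1] = q%:E &
         P [set t | eta n t = 0] = r%:E]) ->
  (forall n, (3 <= n)%N ->
     P [set t | K n t = 1%N] = (2^-1)%:E /\ P [set t | K n t = 2%N] = (2^-1)%:E) ->
  erw_independent P X1 eta K ->
  let Z := fun n : nat => fun t => erw_S X1 eta K n t / n%:R in
  cvg_in_distribution P Z (erw_limit_cdf p q r) /\
  ('E_P[Z n] @[n --> \oo] --> ((p - q) ^+ 2 / 2 * (1 + (p - q)))%:E)%E /\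
  (variance P (Z n) @[n --> \oo] -->
     ((p - q) ^+ 2 / 4 *
       ((p + q) * (1 + 3 * p - q) - (p - q) ^+ 2 * (1 + (p - q)) ^+ 2))%:E)%E.
Proof.
move=> _ _ _ pqr1 mX1 meta mK PX1_1 PX1_N1 PX1_0 Peta PK indep Z.
rewrite (_ : Z = running_mean (erw_X X1 eta K)) //; split; [|split].
- by apply: erw_cvg_in_distribution.
- by apply: (erw_mean_cvg (r := r)).
- by apply: (erw_variance_cvg (r := r)).
Qed.
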